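(* Let $b\in\mathbb{N}$, $b\ge1$, $n=\frac{2^b}{2}+b$, and $a:=2^b=2(n-b)$. Then there exist $a$ sequences $S_0,\dots,S_{a-1}$ of binary vectors, where $S_i=(S_{i,1},S_{i,2},\dots,S_{i,2^n/a})$ with each $S_{i,k}\in\{0,1\}^n$, such that: (1) the sets $\{S_{i,k}:1\le k\le 2^n/a\}$, $i=0,\dots,a-1$, form a partition of $\{0,1\}^n$ (in particular all $S_{i,k}$ are distinct); (2) for all $i\in\{0,\dots,a-1\}$ and all $k\in\{1,\dots,\frac{2^n}{a}-1\}$, $H(S_{i,k},S_{i,k+1})=1$; (3) for all $i,j\in\{0,\dots,a-1\}$ with $i\neq j$ and all $k\in\{1,\dots,\frac{2^n}{a}-1\}$, the coordinate in which $S_{i,k}$ and $S_{i,k+1}$ differ is different from the coordinate in which $S_{j,k}$ and $S_{j,k+1}$ differ, unless $H(S_{i,k},S_{j,k})=1$.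
   Context: $H(u,v)$ denotes the Hamming distance between binary vectors $u,v\in\{0,1\}^n$, i.e. the number of coordinates in which they differ. *)

From mathcomp Require Import all_boot.
Set Implicit Arguments. Unset Strict Implicit. Unset Printing Implicit Defensive.

Definition bvec (n : nat) := {ffun 'I_n -> bool}.

Definition hamming (n : nat) (u v : bvec n) : nat := #|[set t | u t != v t]|.

From mathcomp Require Import all_boot.
From mathcomp Require Import zify.

Set Implicit Arguments.
Unset Strict Implicit.
Unset Printing Implicit Defensive.

(* Write a = 2m, so n = m + b and every sequence has 2^m vectors.  Sequence i
   lists, on the first m coordinates, the reflected Gray code of k = 0 .. 2^m-1
   cyclically rotated by i/2 positions, and on the last b coordinates the
   binary digits of i.  Consecutive Gray codes differ in one bit, and the Gray
   code is a bijection, which gives the partition and property (2).  At step k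
   every sequence flips Gray bit log2(k+1), so sequences i and j flip the same
   coordinate only when they use the same rotation, i.e. i/2 = j/2; then i and
   j differ only in their lowest binary digit, and S_{i,k}, S_{j,k} differ only
   in coordinate m. *)

Definition gray (k t : nat) : bool := odd (k %/ 2 ^ t) (+) odd (k %/ 2 ^ t.+1).

Lemma odd_divS k d : 0 < d -> odd (k.+1 %/ d) = odd (k %/ d) (+) (d %| k.+1).
Proof.
move=> d_gt0; have := ltn_pmod k d_gt0; have := divn_eq k d.
set q := k %/ d; set r := k %% d => /(congr1 succn); rewrite -addnS => -> lt_rd.
case: (ltngtP r.+1 d) => [lt_r1d | lt_dr1 | <-].
- by rewrite divnMDl // divn_small // addn0 dvdn_addr ?dvdn_mull // gtnNdvd ?addbF.
- by rewrite ltnNge lt_rd in lt_dr1.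
- by rewrite -mulSnr mulnK // dvdn_mull // addbT.
Qed.

Lemma gray_flip k s : (gray k.+1 s != gray k s) = (s == logn 2 k.+1).
Proof.
rewrite /gray !odd_divS ?expn_gt0 // !pfactor_dvdn //.
have -> : (s == logn 2 k.+1) = (s <= logn 2 k.+1) (+) (s.+1 <= logn 2 k.+1).
  by case: ltngtP.
by case: (odd _) (odd _) (_ <= _) (_ <= _) => [] [] [] [].
Qed.

Lemma binary_digits_inj N x y : x < 2 ^ N -> y < 2 ^ N ->
  (forall t, t < N -> odd (x %/ 2 ^ t) = odd (y %/ 2 ^ t)) -> x = y.
Proof.
elim: N x y => [|N IHN] x y ltx lty eq_digits.
  by move: ltx lty; rewrite expn0 !ltnS !leqn0 => /eqP-> /eqP->.
rewrite (divn_eq x 2) (divn_eq y 2) !modn2.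
have := eq_digits 0 isT; rewrite !expn0 !divn1 => ->.
congr (_ * _ + _); apply: IHN; rewrite ?ltn_divLR // -?expnSr //.
by move=> t ltt; rewrite -!divnMA -expnS eq_digits.
Qed.

(* The top digit of the binary expansion is recovered from the Gray code and
   each lower digit from the Gray bit and the digit above it. *)
Lemma gray_inj N x y : x < 2 ^ N -> y < 2 ^ N ->
  (forall t, t < N -> gray x t = gray y t) -> x = y.
Proof.
move=> ltx lty eq_gray; apply: (binary_digits_inj ltx lty).
have digits_from_top j : j <= N -> odd (x %/ 2 ^ (N - j)) = odd (y %/ 2 ^ (N - j)).
  elim: j => [|j IHj] lt_jN; first by rewrite subn0 !divn_small.
  have := eq_gray (N - j.+1) (ltac:(lia)).
  by rewrite /gray subnSK // IHj 1?ltnW // => /addIb.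
by move=> t ltt; have := digits_from_top (N - t); rewrite subKn ?(ltnW ltt) // leq_subr; apply.
Qed.

Lemma logn2_lt k m : 0 < k < 2 ^ m -> logn 2 k < m.
Proof.
case/andP=> k_gt0 lt_k; rewrite -(@ltn_exp2l 2) //.
by apply: leq_ltn_trans lt_k; apply: dvdn_leq => //; rewrite pfactor_dvdn.
Qed.

Lemma modn_rotK m p s : p <= m -> ((s + (m - p)) %% m + p) %% m = s %% m.
Proof. by move=> le_pm; rewrite modnDml -addnA subnK // modnDr. Qed.

Lemma hamming_eq1 n (u v : bvec n) (c : 'I_n) :
  (forall t, (u t != v t) = (t == c)) -> hamming u v = 1.
Proof.
move=> diff_c; rewrite /hamming -(cards1 c); congr #|pred_of_set _|.
by apply/setP => t; rewrite !inE diff_c.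
Qed.

Section Construction.

Variables m b : nat.
Hypothesis two_m : 2 ^ b = 2 * m.

Let m_gt0 : 0 < m.
Proof. by have := expn_gt0 2 b; rewrite two_m; lia. Qed.

Let b_gt0 : 0 < b.
Proof. by case: b two_m => // /(congr1 odd); rewrite mul2n odd_double. Qed.

Let rotation_lt i : i < 2 ^ b -> i %/ 2 < m.
Proof. by move=> lti; rewrite ltn_divLR // mulnC -two_m. Qed.

Definition gray_seq (i k : nat) : bvec (m + b) :=
  [ffun t : 'I_(m + b) => if t < m then gray k ((t + i %/ 2) %% m)
                          else odd (i %/ 2 ^ (t - m))].

Lemma gray_seq_flip i k (t : 'I_(m + b)) :
  (gray_seq i k t != gray_seq i k.+1 t) =
  (t < m) && ((t + i %/ 2) %% m == logn 2 k.+1).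
Proof. by rewrite !ffunE; case: ifP => _; rewrite ?eqxx // eq_sym gray_flip. Qed.

(* The coordinate of the rotated Gray part carrying Gray bit s. *)
Let coord_of i s : 'I_(m + b) :=
  Ordinal (leq_trans (ltn_pmod (s + (m - i %/ 2)) m_gt0) (leq_addr b m)).

Let coord_ofK i s : i < 2 ^ b -> s < m -> (coord_of i s + i %/ 2) %% m = s.
Proof.
by move=> lti lts; rewrite modn_rotK ?modn_small // ltnW // rotation_lt.
Qed.

Lemma gray_seq_inj i j k l : i < 2 ^ b -> j < 2 ^ b -> k < 2 ^ m -> l < 2 ^ m ->
  gray_seq i k = gray_seq j l -> i = j /\ k = l.
Proof.
move=> lti ltj ltk ltl /ffunP eq_seq.
have eq_ij : i = j.
  apply: (binary_digits_inj lti ltj) => t ltt.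
  have lt_mt : m + t < m + b by rewrite ltn_add2l.
  have := eq_seq (Ordinal lt_mt).
  by rewrite !ffunE /= ltnNge leq_addr /= addKn.
split=> //; subst j; apply: (gray_inj ltk ltl) => s lts.
by have := eq_seq (coord_of i s); rewrite !ffunE /= ltn_pmod // coord_ofK.
Qed.

Lemma gray_seq_step i k : i < 2 ^ b -> k.+1 < 2 ^ m ->
  hamming (gray_seq i k) (gray_seq i k.+1) = 1.
Proof.
move=> lti ltk; have lt_log : logn 2 k.+1 < m by apply: logn2_lt.
apply: (hamming_eq1 (c := coord_of i (logn 2 k.+1))) => t.
rewrite gray_seq_flip -val_eqE /=; case: ltnP => [lttm | letm] /=.
  by rewrite -[in LHS](coord_ofK lti lt_log) eqn_modDr /= modn_mod modn_small.
by apply/esym/negbTE; rewrite neq_ltn (leq_trans (ltn_pmod _ m_gt0) letm) orbT.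
Qed.

Lemma gray_seq_common_flip i j k (c : 'I_(m + b)) : i < 2 ^ b -> j < 2 ^ b ->
  i != j -> gray_seq i k c != gray_seq i k.+1 c ->
  gray_seq j k c != gray_seq j k.+1 c -> hamming (gray_seq i k) (gray_seq j k) = 1.
Proof.
move=> lti ltj neq_ij; rewrite !gray_seq_flip.
case/andP=> _ /eqP flip_i /andP[_ /eqP flip_j].
have same_rot : i %/ 2 = j %/ 2.
  apply/eqP; rewrite -(modn_small (rotation_lt lti)) -(modn_small (rotation_lt ltj)).
  by rewrite -(eqn_modDl c) flip_i flip_j.
have odd_ij : odd i != odd j.
  apply: contra neq_ij => /eqP odd_eq.
  by rewrite [i](divn_eq _ 2) [j](divn_eq _ 2) !modn2 same_rot odd_eq.
have lt_m : m < m + b by rewrite -{1}(addn0 m) ltn_add2l.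
apply: (hamming_eq1 (c := Ordinal lt_m)) => t.
rewrite !ffunE -val_eqE /= same_rot; case: ltngtP => [lttm | ltmt | ->].
- by rewrite eqxx.
- move: ltmt; rewrite -subn_gt0; case: (t - m) => // d _.
  by rewrite expnS !divnMA same_rot eqxx.
- by rewrite subnn expn0 !divn1.
Qed.

End Construction.

Theorem lemma1 (b : nat) (hb : 1 <= b) :
  let n := 2 ^ b %/ 2 + b in
  let a := 2 ^ b in
  exists S : 'I_a -> 'I_(2 ^ n %/ a) -> bvec n,
    (* (1) partition of {0,1}^n *)
    [/\ injective (fun p : 'I_a * 'I_(2 ^ n %/ a) => S p.1 p.2),
        (forall v : bvec n, exists i k, S i k = v),
    (* (2) consecutive vectors at Hamming distance 1 *)
        (forall (i : 'I_a) (k k' : 'I_(2 ^ n %/ a)), val k' = (val k).+1 ->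
           hamming (S i k) (S i k') = 1) &
    (* (3) same flipped coordinate at step k in sequences i <> j only if
           H(S_{i,k}, S_{j,k}) = 1 *)
        (forall (i j : 'I_a) (k k' : 'I_(2 ^ n %/ a)) (c : 'I_n),
           i != j -> val k' = (val k).+1 ->
           S i k c != S i k' c -> S j k c != S j k' c ->
           hamming (S i k) (S j k) = 1)].
Proof.
move=> n a; set m := 2 ^ b %/ 2.
have two_m : 2 ^ b = 2 * m by rewrite /m -(prednK hb) expnS mulKn.
have len_eq : 2 ^ n %/ a = 2 ^ m by rewrite /n /a expnD mulnK ?expn_gt0.
have lt_len (k : 'I_(2 ^ n %/ a)) : k < 2 ^ m by rewrite -len_eq.
pose S (i : 'I_a) (k : 'I_(2 ^ n %/ a)) := gray_seq m b i k.
have S_inj : injective (fun p : 'I_a * 'I_(2 ^ n %/ a) => S p.1 p.2).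
  move=> [i k] [j l] /= /(gray_seq_inj two_m)[] // eq_ij eq_kl.
  by rewrite (val_inj eq_ij) (val_inj eq_kl).
exists S; split=> //.
- move=> v; have card_le : #|{: bvec n}| <= #|{: 'I_a * 'I_(2 ^ n %/ a)}|.
    by rewrite card_ffun card_bool card_prod !card_ord len_eq -expnD addnC.
  by case/codomP: (inj_card_onto S_inj card_le v) => -[i k] ->; exists i, k.
- move=> i k k' eq_k'; rewrite /S eq_k' (gray_seq_step two_m) ?ltn_ord //.
  by have := lt_len k'; rewrite eq_k'.
- by move=> i j k k' c neq_ij eq_k'; rewrite /S eq_k'; apply: (gray_seq_common_flip two_m).
Qed.
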